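(* In the setting described in the context, there exists $N_0$ such that for every $(p,q)\in\mathbb{Z}^2$ with $|(p,q)|>N_0$ the lifted short arc $\widetilde s_{p,q}$ is defined and contained in $R$ (i.e.\ $s_{p,q}$ is $R$-close to $A$), and hence the short arc $s_{p,q}=\pi(\widetilde s_{p,q})$ is embedded in $M$. In particular, all but finitely many geodesics $\gamma_{p,q}$ have embedded short arcs.
   Context: Let $M=\mathbb{H}^3/\Gamma$ be a cusped orientable hyperbolic 3-manifold, $\Gamma\subset \mathrm{PSL}_2(\mathbb{C})$ discrete and torsion-free, with covering map $\pi:\mathbb{H}^3\to M$. Use the upper half-space model, points written $(z,h)$, $z\in\mathbb{C}$, $h>0$. Fix a cusp of $M$ and let $U$ be its maximal embedded horoball neighbourhood; its boundary $T$ is a torus with finitely many self-tangency points. Fix one such point $A$ (a ''bumping point''). Normalise (by conjugating $\Gamma$) so that $\pi^{-1}(T)$ contains the horosphere $H_\infty=\{h=1\}$ and the horosphere $H_0$ centred at $0$ of Euclidean diameter $1$, which touch at $A_{0,0}=(0,1)\in\pi^{-1}(A)$. The stabiliser of $\infty$ in $\Gamma$ is generated by $a=\begin{pmatrix}1&t_\alpha\\0&1\end{pmatrix}$, $b=\begin{pmatrix}1&t_\beta\\0&1\end{pmatrix}$ with $t_\alpha,t_\beta$ $\mathbb{R}$-linearly independent. Let $b_{0,0}=x_0t_\alpha+y_0t_\beta$ with $x_0,y_0\in[0,1)$ not both $0$ be such that there is $g\in\Gamma$ with $g(H_0)=H_\infty$, $g(0)=\infty$, $g(A_{0,0})=(b_{0,0},1)$;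 then $g=\begin{pmatrix}cb_{0,0}&-1/c\\c&0\end{pmatrix}$ for some $c\in\mathbb{C}$. For $(p,q)\in\mathbb{Z}^2$ put $b_{p,q}=b_{0,0}+pt_\alpha+qt_\beta$, $g_{p,q}=a^pb^qg$, let $\widetilde\gamma_{p,q}$ be the axis of $g_{p,q}$ in $\mathbb{H}^3$ and $\gamma_{p,q}=\pi(\widetilde\gamma_{p,q})$ the corresponding closed geodesic of $M$. For $|(p,q)|$ large, $\widetilde\gamma_{p,q}$ (a Euclidean semicircle from $z_-$ to $z_+$, where $z_\pm$ are the fixed points of $g_{p,q}$ with $z_-\to0$) meets $H_\infty$ in exactly two points, $C_{p,q}=(c_{p,q},1)$ nearer $z_-$ and $D_{p,q}=(d_{p,q},1)$ nearer $z_+$. The lifted short arc is the geodesic segment $\widetilde s_{p,q}=[g_{p,q}^{-1}(D_{p,q}),C_{p,q}]\subset\widetilde\gamma_{p,q}$, and the short arc is $s_{p,q}=\pi(\widetilde s_{p,q})$. Let $R\subset\mathbb{H}^3$ be the set of points strictly closer to $A_{0,0}$ than to any other point of $\pi^{-1}(A)$; $s_{p,q}$ is called $R$-close to $A$ if $\widetilde s_{p,q}\subset R$. *)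

(* classical reals. Concrete upper half-space model of H^3. *)
From Stdlib Require Import Reals Lra ZArith.
Open Scope R_scope.

Definition Cx : Type := (R * R)%type.
Definition CR (r : R) : Cx := (r, 0).
Definition C0 : Cx := (0, 0).
Definition Cadd (u v : Cx) : Cx := (fst u + fst v, snd u + snd v).
Definition Copp (u : Cx) : Cx := (- fst u, - snd u).
Definition Csub (u v : Cx) : Cx := Cadd u (Copp v).
Definition Cmul (u v : Cx) : Cx :=
  (fst u * fst v - snd u * snd v, fst u * snd v + snd u * fst v).
Definition Cscale (r : R) (u : Cx) : Cx := (r * fst u, r * snd u).
Definition Cconj (u : Cx) : Cx := (fst u, - snd u).
Definition Cnorm2 (u : Cx) : R := fst u * fst u + snd u * snd u.
Definition Cmod (u : Cx) : R := sqrt (Cnorm2 u).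
Definition Cinv (u : Cx) : Cx := (fst u / Cnorm2 u, - snd u / Cnorm2 u).

(** 2x2 complex matrices; SL2(Cx) elements, Gamma is taken as the full
    preimage in SL2(Cx) of the subgroup of PSL2(Cx). *)
Record mat : Type := Mat { m11 : Cx; m12 : Cx; m21 : Cx; m22 : Cx }.
Definition mI : mat := Mat (CR 1) C0 C0 (CR 1).
Definition mneg (g : mat) : mat :=
  Mat (Copp (m11 g)) (Copp (m12 g)) (Copp (m21 g)) (Copp (m22 g)).
Definition mmul (g k : mat) : mat :=
  Mat (Cadd (Cmul (m11 g) (m11 k)) (Cmul (m12 g) (m21 k)))
      (Cadd (Cmul (m11 g) (m12 k)) (Cmul (m12 g) (m22 k)))
      (Cadd (Cmul (m21 g) (m11 k)) (Cmul (m22 g) (m21 k)))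
      (Cadd (Cmul (m21 g) (m12 k)) (Cmul (m22 g) (m22 k))).
Definition mdet (g : mat) : Cx :=
  Csub (Cmul (m11 g) (m22 g)) (Cmul (m12 g) (m21 g)).
(** inverse of a determinant-one matrix *)
Definition minv (g : mat) : mat :=
  Mat (m22 g) (Copp (m12 g)) (Copp (m21 g)) (m11 g).
Fixpoint mpow (g : mat) (n : nat) : mat :=
  match n with O => mI | S k => mmul g (mpow g k) end.
Definition mpowZ (g : mat) (z : Z) : mat :=
  match z with
  | Z0 => mI
  | Zpos n => mpow g (Pos.to_nat n)
  | Zneg n => mpow (minv g) (Pos.to_nat n)
  end.
Definition mdist2 (g k : mat) : R :=
  Cnorm2 (Csub (m11 g) (m11 k)) + Cnorm2 (Csub (m12 g) (m12 k))
  + Cnorm2 (Csub (m21 g) (m21 k)) + Cnorm2 (Csub (m22 g) (m22 k)).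

Record pt : Type := mkpt { pz : Cx; ph : R }.
Definition inH3 (P : pt) : Prop := 0 < ph P.

(** Poincare extension of the Moebius action of g to H^3. *)
Definition act (g : mat) (P : pt) : pt :=
  let a := m11 g in let b := m12 g in let c := m21 g in let d := m22 g in
  let z := pz P in let h := ph P in
  let czd := Cadd (Cmul c z) d in
  let den := Cnorm2 czd + Cnorm2 c * (h * h) in
  mkpt (Cscale (/ den)
          (Cadd (Cmul (Cadd (Cmul a z) b) (Cconj czd))
                (Cscale (h * h) (Cmul a (Cconj c)))))
       (h / den).

Definition fixedpt (g : mat) (z : Cx) : Prop :=
  Cadd (Cmul (m21 g) z) (m22 g) <> C0 /\
  Cadd (Cmul (m11 g) z) (m12 g) = Cmul z (Cadd (Cmul (m21 g) z) (m22 g)).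

Definition arcosh (x : R) : R := ln (x + sqrt (x * x - 1)).
Definition hdist (P Q : pt) : R :=
  arcosh (1 + (Cnorm2 (Csub (pz P) (pz Q)) + (ph P - ph Q) * (ph P - ph Q))
              / (2 * ph P * ph Q)).

(** Closed geodesic segment [P,Q] in H^3. *)
Definition hseg (P Q X : pt) : Prop :=
  inH3 X /\ hdist P X + hdist X Q = hdist P Q.

(** The geodesic with endpoints zm, zp in Cx: the Euclidean semicircle
    orthogonal to Cx from zm to zp. *)
Definition on_geod (zm zp : Cx) (X : pt) : Prop :=
  exists t : R, 0 < t < 1 /\
    pz X = Cadd zm (Cscale t (Csub zp zm)) /\
    ph X * ph X = t * (1 - t) * Cnorm2 (Csub zp zm) /\ 0 < ph X.

(** Horospheres: H_inf = {h = 1}, H_0 = centred at 0 of Euclidean diameter 1. *)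
Definition Hinf (X : pt) : Prop := ph X = 1.
Definition H0 (X : pt) : Prop :=
  0 < ph X /\ Cnorm2 (pz X) + (ph X - /2) * (ph X - /2) = /4.

Definition is_group (Gam : mat -> Prop) : Prop :=
  Gam mI /\
  (forall g, Gam g -> mdet g = CR 1) /\
  (forall g k, Gam g -> Gam k -> Gam (mmul g k)) /\
  (forall g, Gam g -> Gam (minv g)) /\
  (forall g, Gam g -> Gam (mneg g)).
Definition discrete (Gam : mat -> Prop) : Prop :=
  exists eps, 0 < eps /\ forall g, Gam g -> mdist2 g mI < eps -> g = mI.
Definition torsion_free (Gam : mat -> Prop) : Prop :=
  forall g n, Gam g -> (1 <= n)%nat ->
    (mpow g n = mI \/ mpow g n = mneg mI) -> g = mI \/ g = mneg mI.

Definition transl (t : Cx) : mat := Mat (CR 1) t C0 (CR 1).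

(** Orbit pi^{-1}(A) of the bumping point A_{0,0} = (0,1), and the region R. *)
Definition A00 : pt := mkpt C0 1.
Definition liftA (Gam : mat -> Prop) (Y : pt) : Prop :=
  exists k, Gam k /\ Y = act k A00.
Definition regionR (Gam : mat -> Prop) (X : pt) : Prop :=
  inH3 X /\ forall Y, liftA Gam Y -> Y <> A00 -> hdist X A00 < hdist X Y.

From Stdlib Require Import Reals ZArith Lra Lia Psatz Nsatz.
Open Scope R_scope.

(* The normalisation g(A_{0,0}) = (b_{0,0},1) forces |c| = 1, and g_{p,q} is the matrix
   gmat c B = [[cB, -1/c], [c, 0]] with B = b_{p,q}, i.e. z |-> B - 1/(c^2 z).
   (1) Orbit classification: an element of Gamma either fixes infinity (a translation,
       trivial or by a lattice vector of length >= sqrt lam), or is gmat c B' times +-1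
       (moving A_{0,0} to (B',1) with |B'|^2 >= lam), or, by maximality of the cusp,
       has |c|, |d| >= 1 and pushes A_{0,0} to height <= 1/2.  Consequently every point
       X that is [close] to A_{0,0} lies in R, and no element of Gamma maps such an X
       to another such point unless it fixes it.
   (2) Geometry of the axis: the fixed points of gmat c B are the roots of
       z^2 - B z + conj(c)^2; for |B| large they are well separated, the axis crosses
       H_inf in exactly two points C, D, and C is within O(1/|B|) of 0.  The preimage
       g^{-1}(D) is then also near A_{0,0}, and so is the whole segment [g^{-1}(D), C]. *)

(** * Complex arithmetic *)

Ltac cunf := unfold Cadd, Csub, Copp, Cmul, Cscale, Cconj, Cnorm2, Cinv, CR, C0 in *; simpl in *.

Lemma Cx_eq (u v : Cx) : fst u = fst v -> snd u = snd v -> u = v.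
Proof. destruct u, v; simpl; intros; subst; reflexivity. Qed.

Ltac ceq := apply Cx_eq; cunf.

Lemma Cnorm2_nonneg u : 0 <= Cnorm2 u.
Proof. destruct u; unfold Cnorm2; simpl; nra. Qed.

Lemma Cnorm2_eq0 u : Cnorm2 u = 0 -> u = C0.
Proof.
  destruct u as [a b]; unfold Cnorm2, C0; simpl; intro H.
  assert (a = 0) by nra. assert (b = 0) by nra. subst; reflexivity.
Qed.

Lemma Cnorm2_pos u : u <> C0 -> 0 < Cnorm2 u.
Proof.
  intro H. destruct (Rle_lt_or_eq_dec 0 (Cnorm2 u) (Cnorm2_nonneg u)); auto.
  exfalso; apply H, Cnorm2_eq0; auto.
Qed.

Lemma Cnorm2_mul u v : Cnorm2 (Cmul u v) = Cnorm2 u * Cnorm2 v.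
Proof. destruct u, v; cunf; ring. Qed.
Lemma Cnorm2_scale r u : Cnorm2 (Cscale r u) = r * r * Cnorm2 u.
Proof. destruct u; cunf; ring. Qed.
Lemma Cnorm2_conj u : Cnorm2 (Cconj u) = Cnorm2 u.
Proof. destruct u; cunf; ring. Qed.
Lemma Cnorm2_opp u : Cnorm2 (Copp u) = Cnorm2 u.
Proof. destruct u; cunf; ring. Qed.

(* Parallelogram-type bounds, used in place of the triangle inequality. *)
Lemma Cnorm2_add_le u v : Cnorm2 (Cadd u v) <= 2 * Cnorm2 u + 2 * Cnorm2 v.
Proof. destruct u as [a b], v as [c d]; cunf. pose proof (pow2_ge_0 (a - c)); pose proof (pow2_ge_0 (b - d)); nra. Qed.
Lemma Cnorm2_sub_le u v : Cnorm2 (Csub u v) <= 2 * Cnorm2 u + 2 * Cnorm2 v.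
Proof. destruct u as [a b], v as [c d]; cunf. pose proof (pow2_ge_0 (a + c)); pose proof (pow2_ge_0 (b + d)); nra. Qed.
Lemma Cnorm2_add_ge u v : Cnorm2 (Cadd u v) >= Cnorm2 v / 2 - Cnorm2 u.
Proof. destruct u as [a b], v as [c d]; cunf. pose proof (pow2_ge_0 (2 * a + c)); pose proof (pow2_ge_0 (2 * b + d)); nra. Qed.
Lemma Cnorm2_sub_ge u v : Cnorm2 (Csub u v) >= Cnorm2 u / 2 - Cnorm2 v.
Proof. destruct u as [a b], v as [c d]; cunf. pose proof (pow2_ge_0 (a - 2 * c)); pose proof (pow2_ge_0 (b - 2 * d)); nra. Qed.
Lemma Cnorm2_diff u v : Cnorm2 v <= 2 * Cnorm2 u + 2 * Cnorm2 (Csub u v).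
Proof. destruct u as [a b], v as [c d]; cunf. pose proof (pow2_ge_0 (2 * a - c)); pose proof (pow2_ge_0 (2 * b - d)); nra. Qed.

Lemma Cmul_eq0 u v : Cmul u v = C0 -> u = C0 \/ v = C0.
Proof.
  intro H. assert (E : Cnorm2 u * Cnorm2 v = 0) by (rewrite <- Cnorm2_mul, H; cunf; ring).
  destruct (Rmult_integral _ _ E); [left | right]; apply Cnorm2_eq0; auto.
Qed.

Lemma Ceq_dec (u v : Cx) : {u = v} + {u <> v}.
Proof.
  destruct u as [a b], v as [c d].
  destruct (Req_dec_T a c), (Req_dec_T b d); subst; auto; right; intro H; inversion H; auto.
Qed.

Lemma Cmod_lt_norm2 u v : Cmod u < Cmod v -> Cnorm2 u < Cnorm2 v.
Proof. unfold Cmod; intro H. apply sqrt_lt_0_alt in H; auto. Qed.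
Lemma norm2_lt_Cmod u v : Cnorm2 u < Cnorm2 v -> Cmod u < Cmod v.
Proof. unfold Cmod; intro H. apply sqrt_lt_1_alt; split; auto. apply Cnorm2_nonneg. Qed.

Lemma Cinv_unit c : Cnorm2 c = 1 -> Cinv c = Cconj c.
Proof. intro H. unfold Cinv; rewrite H. destruct c; ceq; field. Qed.

(** * Matrices: translations and the elements g_{p,q} *)

Lemma mat_eq (g k : mat) :
  m11 g = m11 k -> m12 g = m12 k -> m21 g = m21 k -> m22 g = m22 k -> g = k.
Proof. destruct g, k; simpl; intros; subst; auto. Qed.

(* [gmat c B] acts by z |-> B - 1/(c^2 z); g_{p,q} is [gmat c b_{p,q}]. *)
Definition gmat (c B : Cx) : mat := Mat (Cmul c B) (Copp (Cinv c)) c C0.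

Lemma mmul_transl u v : mmul (transl u) (transl v) = transl (Cadd u v).
Proof. destruct u, v; unfold transl; apply mat_eq; simpl; ceq; ring. Qed.

Lemma mpow_transl t n : mpow (transl t) n = transl (Cscale (INR n) t).
Proof.
  induction n as [|n IH].
  - destruct t; unfold transl, mI; simpl; apply mat_eq; simpl; ceq; ring.
  - simpl mpow. rewrite IH, mmul_transl, S_INR. f_equal. destruct t; ceq; ring.
Qed.

Lemma mpowZ_transl t p : mpowZ (transl t) p = transl (Cscale (IZR p) t).
Proof.
  destruct p; simpl.
  - destruct t; unfold transl, mI; apply mat_eq; simpl; ceq; ring.
  - rewrite mpow_transl, INR_IPR. reflexivity.
  - assert (Hinv : minv (transl t) = transl (Copp t))
      by (destruct t; unfold transl, minv; apply mat_eq; simpl; ceq; ring).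
    rewrite Hinv, mpow_transl, INR_IPR. f_equal. destruct t; ceq; unfold IZR; ring.
Qed.

Lemma mmul_transl_gmat w c B : mmul (transl w) (gmat c B) = gmat c (Cadd B w).
Proof. destruct w, c, B; unfold transl, gmat; apply mat_eq; simpl; ceq; ring. Qed.

Lemma gpq_gmat ta tb c b (p q : Z) :
  mmul (mmul (mpowZ (transl ta) p) (mpowZ (transl tb) q)) (gmat c b)
  = gmat c (Cadd b (Cadd (Cscale (IZR p) ta) (Cscale (IZR q) tb))).
Proof. rewrite !mpowZ_transl, mmul_transl. apply mmul_transl_gmat. Qed.

Lemma mmul_mneg_l a b : mmul (mneg a) b = mneg (mmul a b).
Proof.
  destruct a as [[? ?] [? ?] [? ?] [? ?]], b as [[? ?] [? ?] [? ?] [? ?]].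
  apply mat_eq; simpl; ceq; ring.
Qed.

Lemma mmul_minv_cancel k g : mdet g = CR 1 -> mmul (mmul k (minv g)) g = k.
Proof.
  destruct k as [[? ?] [? ?] [? ?] [? ?]], g as [[? ?] [? ?] [? ?] [? ?]].
  unfold mdet, minv; simpl; cunf. intro H. inversion H.
  apply mat_eq; simpl; ceq; nsatz.
Qed.

(** * The action on the upper half-space *)

Lemma pt_eq (P Q : pt) : pz P = pz Q -> ph P = ph Q -> P = Q.
Proof. destruct P, Q; simpl; intros; subst; auto. Qed.

Lemma act_ph k P :
  ph (act k P) = ph P / (Cnorm2 (Cadd (Cmul (m21 k) (pz P)) (m22 k)) + Cnorm2 (m21 k) * (ph P * ph P)).
Proof. reflexivity. Qed.

Lemma act_pz k P :
  pz (act k P) =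
  Cscale (/ (Cnorm2 (Cadd (Cmul (m21 k) (pz P)) (m22 k)) + Cnorm2 (m21 k) * (ph P * ph P)))
    (Cadd (Cmul (Cadd (Cmul (m11 k) (pz P)) (m12 k)) (Cconj (Cadd (Cmul (m21 k) (pz P)) (m22 k))))
          (Cscale (ph P * ph P) (Cmul (m11 k) (Cconj (m21 k))))).
Proof. reflexivity. Qed.

(* -I acts trivially, so Gamma may be read in SL2 or PSL2. *)
Lemma act_mneg k P : act (mneg k) P = act k P.
Proof.
  destruct k as [a b c d], P as [z h]. unfold act, mneg; simpl.
  replace (Cnorm2 (Cadd (Cmul (Copp c) z) (Copp d))) with (Cnorm2 (Cadd (Cmul c z) d))
    by (destruct c, z, d; cunf; ring).
  rewrite Cnorm2_opp. f_equal. f_equal. destruct a, b, c, d, z; ceq; ring.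
Qed.

Lemma act_transl w P : act (transl w) P = mkpt (Cadd (pz P) w) (ph P).
Proof.
  destruct P as [z h]. unfold transl.
  assert (D : Cnorm2 (Cadd (Cmul C0 z) (CR 1)) + Cnorm2 C0 * (h * h) = 1)
    by (destruct z; cunf; ring).
  apply pt_eq; [rewrite act_pz | rewrite act_ph]; simpl; rewrite D;
    [destruct z, w; ceq; field | field].
Qed.

Lemma act_gmat_A00 c B : Cnorm2 c = 1 -> act (gmat c B) A00 = mkpt B 1.
Proof.
  intro Hc. unfold gmat, A00. rewrite (Cinv_unit c Hc).
  assert (D : Cnorm2 (Cadd (Cmul c C0) C0) + Cnorm2 c * (1 * 1) = 1)
    by (rewrite Hc; destruct c; cunf; ring).
  apply pt_eq.
  - rewrite act_pz; simpl. rewrite D, Rinv_1. destruct c as [c1 c2], B; cunf.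
    apply Cx_eq; simpl; nsatz.
  - rewrite act_ph; simpl. rewrite D. field.
Qed.

Lemma gmat_unit c b : c <> C0 -> act (gmat c b) A00 = mkpt b 1 -> Cnorm2 c = 1.
Proof.
  intros Hc HgA. apply (f_equal ph) in HgA. rewrite act_ph in HgA. cbn [ph pz m21 m22 A00 gmat] in HgA.
  replace (Cnorm2 (Cadd (Cmul c C0) C0)) with 0 in HgA by (destruct c; cunf; ring).
  pose proof (Cnorm2_pos c Hc).
  replace (1 / (0 + Cnorm2 c * (1 * 1))) with (/ Cnorm2 c) in HgA by (field; lra).
  rewrite <- (Rinv_inv (Cnorm2 c)), HgA. apply Rinv_1.
Qed.

Lemma inv_lin D V W b : 0 < D -> V = W + D * b -> / D * V + - b = / D * W.
Proof. intros. subst. field. lra. Qed.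

(* |g(z,h) - B| (|z|^2 + h^2) = |z|: gmat c B maps points near height 1 close to (B,1). *)
Lemma act_gmat_pz c B z h : Cnorm2 c = 1 -> 0 < h ->
  Cnorm2 (Csub (pz (act (gmat c B) (mkpt z h))) B) * (Cnorm2 z + h * h) * (Cnorm2 z + h * h)
  = Cnorm2 z.
Proof.
  intros Hc Hh. unfold gmat. rewrite act_pz. cbn [pz ph m11 m12 m21 m22]. rewrite (Cinv_unit c Hc).
  assert (D : Cnorm2 (Cadd (Cmul c z) C0) + Cnorm2 c * (h * h) = Cnorm2 z + h * h)
    by (clear Hh; destruct c, z; cunf; nsatz).
  rewrite D.
  assert (Dp : 0 < Cnorm2 z + h * h) by (pose proof (Cnorm2_nonneg z); nra).
  set (D' := Cnorm2 z + h * h) in *.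
  assert (E : Csub (Cscale (/ D') (Cadd (Cmul (Cadd (Cmul (Cmul c B) z) (Copp (Cconj c)))
                                              (Cconj (Cadd (Cmul c z) C0)))
                                        (Cscale (h * h) (Cmul (Cmul c B) (Cconj c))))) B
             = Cscale (/ D') (Copp (Cmul (Cmul (Cconj c) (Cconj c)) (Cconj z)))).
  { unfold D' in *. destruct c as [c1 c2], B as [b1 b2], z as [z1 z2]. cunf.
    apply Cx_eq; simpl; (apply inv_lin; [lra | clear -Hc; nsatz]). }
  rewrite E, Cnorm2_scale, Cnorm2_opp, !Cnorm2_mul, !Cnorm2_conj, Hc. field. lra.
Qed.

(** * Hyperbolic distance *)

Lemma div_lt a b c : 0 < b -> a < c * b -> a / b < c.
Proof. intros. apply Rmult_lt_reg_r with b; auto. unfold Rdiv. rewrite Rmult_assoc, Rinv_l; lra. Qed.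
Lemma lt_div a b c : 0 < b -> c * b < a -> c < a / b.
Proof. intros. apply Rmult_lt_reg_r with b; auto. unfold Rdiv. rewrite Rmult_assoc, Rinv_l; lra. Qed.
Lemma div_le a b c : 0 < b -> a <= c * b -> a / b <= c.
Proof. intros. apply Rmult_le_reg_r with b; auto. unfold Rdiv. rewrite Rmult_assoc, Rinv_l; lra. Qed.
Lemma le_div a b c : 0 < b -> c * b <= a -> c <= a / b.
Proof. intros. apply Rmult_le_reg_r with b; auto. unfold Rdiv. rewrite Rmult_assoc, Rinv_l; lra. Qed.

Lemma arcosh_arg_ge1 a : 1 <= a -> 1 <= a + sqrt (a * a - 1).
Proof. intro. pose proof (sqrt_pos (a * a - 1)). lra. Qed.

Lemma arcosh_lt a b : 1 <= a < b -> arcosh a < arcosh b.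
Proof.
  intros [H1 H2]. unfold arcosh. apply ln_increasing.
  - pose proof (arcosh_arg_ge1 a H1). lra.
  - assert (sqrt (a * a - 1) <= sqrt (b * b - 1)) by (apply sqrt_le_1_alt; nra). lra.
Qed.

Lemma arcosh_nonneg a : 1 <= a -> 0 <= arcosh a.
Proof.
  intro H. unfold arcosh. pose proof (arcosh_arg_ge1 a H) as H1.
  destruct (Rle_lt_or_eq_dec _ _ H1) as [Hlt | Heq].
  - rewrite <- ln_1. left. apply ln_increasing; lra.
  - rewrite <- Heq, ln_1. lra.
Qed.

Lemma arcosh_le_inv a b : 1 <= a -> 1 <= b -> arcosh a <= arcosh b -> a <= b.
Proof. intros Ha Hb H. destruct (Rle_or_lt a b); auto. pose proof (arcosh_lt b a ltac:(lra)). lra. Qed.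

(* hdist P Q = arcosh (1 + hquot P Q); comparisons of distances reduce to
   comparisons of the elementary quantity [hquot]. *)
Definition hquot (P Q : pt) : R :=
  (Cnorm2 (Csub (pz P) (pz Q)) + (ph P - ph Q) * (ph P - ph Q)) / (2 * ph P * ph Q).

Lemma hquot_nonneg (P Q : pt) : 0 < ph P -> 0 < ph Q -> 0 <= hquot P Q.
Proof.
  intros. unfold hquot. apply Rmult_le_pos.
  - pose proof (Cnorm2_nonneg (Csub (pz P) (pz Q))). pose proof (Rle_0_sqr (ph P - ph Q)); unfold Rsqr in *; lra.
  - left. apply Rinv_0_lt_compat. nra.
Qed.

Lemma hdist_nonneg P Q : 0 < ph P -> 0 < ph Q -> 0 <= hdist P Q.
Proof. intros. apply arcosh_nonneg. pose proof (hquot_nonneg P Q H H0). unfold hquot in *. lra. Qed.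

Lemma hdist_lt_of_hquot X Q Y : 0 < ph X -> 0 < ph Q -> hquot X Q < hquot X Y ->
  hdist X Q < hdist X Y.
Proof.
  intros HX HQ H. apply arcosh_lt. pose proof (hquot_nonneg X Q HX HQ). unfold hquot in *. lra.
Qed.

Lemma hquot_le_of_hseg P Q X : 0 < ph P -> 0 < ph Q -> hseg P Q X -> hquot X Q <= hquot P Q.
Proof.
  intros HP HQ [HX Hseg]. pose proof (hdist_nonneg P X HP HX).
  assert (Hd : hdist X Q <= hdist P Q) by lra.
  apply arcosh_le_inv in Hd.
  - unfold hquot. lra.
  - pose proof (hquot_nonneg X Q HX HQ). unfold hquot in *. lra.
  - pose proof (hquot_nonneg P Q HP HQ). unfold hquot in *. lra.
Qed.

(** * Lattice estimates *)

Lemma lattice_coercive (ta tb : Cx)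
  (Hind : forall r s : R, Cadd (Cscale r ta) (Cscale s tb) = C0 -> r = 0 /\ s = 0) :
  exists lam, 0 < lam /\ forall r s, Cnorm2 (Cadd (Cscale r ta) (Cscale s tb)) >= lam * (r * r + s * s).
Proof.
  destruct ta as [a1 a2], tb as [b1 b2].
  set (D := a1 * b2 - a2 * b1).
  assert (HD : D <> 0).
  { intro HD. unfold D in HD.
    destruct (Req_dec b2 0), (Req_dec a2 0).
    - destruct (Req_dec b1 0), (Req_dec a1 0).
      + subst. destruct (Hind 1 0) as [Hr _]; [ceq; ring | lra].
      + destruct (Hind b1 (- a1)) as [_ Hr]; [ceq; nra | lra].
      + destruct (Hind b1 (- a1)) as [Hr _]; [ceq; nra | lra].
      + destruct (Hind b1 (- a1)) as [Hr _]; [ceq; nra | lra].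
    - destruct (Hind b2 (- a2)) as [_ Hr]; [ceq; nra | lra].
    - destruct (Hind b2 (- a2)) as [Hr _]; [ceq; nra | lra].
    - destruct (Hind b2 (- a2)) as [Hr _]; [ceq; nra | lra]. }
  set (S := a1 * a1 + a2 * a2 + b1 * b1 + b2 * b2).
  assert (HS : 0 < S).
  { unfold S. destruct (Req_dec a1 0); [destruct (Req_dec b2 0)|]; [unfold D in HD; subst; nra | nra | nra]. }
  exists (D * D / S). split; [apply Rdiv_lt_0_compat; nra |].
  intros r s. cunf.
  (* Lagrange-type identity: |r ta + s tb|^2 S - D^2 (r^2 + s^2) is a sum of squares. *)
  assert (K : ((a1 * r + b1 * s) * (a1 * r + b1 * s) + (a2 * r + b2 * s) * (a2 * r + b2 * s)) * S
              - D * D * (r * r + s * s) >= 0).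
  { unfold S, D.
    match goal with |- ?e >= 0 =>
      replace e with (((a1 * a1 + a2 * a2) * r + (a1 * b1 + a2 * b2) * s) ^ 2
                      + ((a1 * b1 + a2 * b2) * r + (b1 * b1 + b2 * b2) * s) ^ 2) by ring end.
    apply Rle_ge, Rplus_le_le_0_compat; apply pow2_ge_0. }
  apply Rle_ge.
  replace (D * D / S * (r * r + s * s)) with (D * D * (r * r + s * s) / S) by (field; lra).
  apply div_le; [lra |]. nra.
Qed.

Lemma nonzero_int_sq (p q : Z) : p <> 0%Z \/ q <> 0%Z -> IZR p * IZR p + IZR q * IZR q >= 1.
Proof.
  assert (A : forall z : Z, z <> 0%Z -> IZR z * IZR z >= 1).
  { intros z Hz. destruct (Z_lt_le_dec z 0).
    - assert (IZR z <= -1) by (apply IZR_le; lia). nra.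
    - assert (1 <= IZR z) by (apply IZR_le; lia). nra. }
  intros [H | H]; pose proof (A _ H); nra.
Qed.

Lemma frac_dist (x : R) (p : Z) : 0 < x < 1 ->
  (x + IZR p) * (x + IZR p) >= Rmin x (1 - x) * Rmin x (1 - x).
Proof.
  intros Hx. pose proof (Rmin_l x (1 - x)). pose proof (Rmin_r x (1 - x)).
  assert (0 < Rmin x (1 - x)) by (apply Rmin_glb_lt; lra).
  destruct (Z_lt_le_dec p 0).
  - assert (IZR p <= -1) by (apply IZR_le; lia). nra.
  - assert (0 <= IZR p) by (apply IZR_le; lia). nra.
Qed.

Lemma shift_coercive x0 y0 : 0 <= x0 < 1 -> 0 <= y0 < 1 -> x0 <> 0 \/ y0 <> 0 ->
  exists m0, 0 < m0 /\
    forall p q : Z, (x0 + IZR p) * (x0 + IZR p) + (y0 + IZR q) * (y0 + IZR q) >= m0.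
Proof.
  intros Hx Hy [H | H].
  - assert (0 < Rmin x0 (1 - x0)) by (apply Rmin_glb_lt; lra).
    exists (Rmin x0 (1 - x0) * Rmin x0 (1 - x0)). split; [nra |].
    intros p q. pose proof (frac_dist x0 p ltac:(lra)). pose proof (Rle_0_sqr (y0 + IZR q)); unfold Rsqr in *; lra.
  - assert (0 < Rmin y0 (1 - y0)) by (apply Rmin_glb_lt; lra).
    exists (Rmin y0 (1 - y0) * Rmin y0 (1 - y0)). split; [nra |].
    intros p q. pose proof (frac_dist y0 q ltac:(lra)). pose proof (Rle_0_sqr (x0 + IZR p)); unfold Rsqr in *; lra.
Qed.

Lemma bump_translate_eq ta tb x0 y0 (p q : Z) :
  Cadd (Cadd (Cscale x0 ta) (Cscale y0 tb)) (Cadd (Cscale (IZR p) ta) (Cscale (IZR q) tb))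
  = Cadd (Cscale (x0 + IZR p) ta) (Cscale (y0 + IZR q) tb).
Proof. destruct ta, tb; ceq; ring. Qed.

Section Lattice.
Variables (ta tb : Cx) (x0 y0 : R).
Hypothesis Hind : forall r s : R, Cadd (Cscale r ta) (Cscale s tb) = C0 -> r = 0 /\ s = 0.
Hypotheses (Hx0 : 0 <= x0 < 1) (Hy0 : 0 <= y0 < 1).

Lemma bump_translate_far (M : R) : exists N0, forall p q : Z,
  sqrt (IZR p ^ 2 + IZR q ^ 2) > N0 ->
  M <= Cnorm2 (Cadd (Cadd (Cscale x0 ta) (Cscale y0 tb)) (Cadd (Cscale (IZR p) ta) (Cscale (IZR q) tb))).
Proof.
  destruct (lattice_coercive ta tb Hind) as [lam0 [Hl0 Hlat0]].
  exists (sqrt (2 * (Rabs M / lam0 + 2))). intros p q HN.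
  apply sqrt_lt_0_alt in HN. rewrite bump_translate_eq.
  pose proof (Hlat0 (x0 + IZR p) (y0 + IZR q)). pose proof (Rle_abs M).
  assert (x0 * x0 <= 1) by nra. assert (y0 * y0 <= 1) by nra.
  pose proof (pow2_ge_0 (IZR p + 2 * x0)). pose proof (pow2_ge_0 (IZR q + 2 * y0)).
  assert (S : Rabs M / lam0 < (x0 + IZR p) * (x0 + IZR p) + (y0 + IZR q) * (y0 + IZR q))
    by (simpl in HN; nra).
  apply Rmult_lt_compat_l with (r := lam0) in S; auto.
  replace (lam0 * (Rabs M / lam0)) with (Rabs M) in S by (field; lra). lra.
Qed.

Hypothesis Hxy : x0 <> 0 \/ y0 <> 0.

Lemma lattice_gaps : exists lam, 0 < lam /\
  (forall p q : Z, (p <> 0 \/ q <> 0)%Z ->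
     Cnorm2 (Cadd (Cscale (IZR p) ta) (Cscale (IZR q) tb)) >= lam) /\
  (forall p q : Z, Cnorm2 (Cadd (Cadd (Cscale x0 ta) (Cscale y0 tb))
                                (Cadd (Cscale (IZR p) ta) (Cscale (IZR q) tb))) >= lam).
Proof.
  destruct (lattice_coercive ta tb Hind) as [lam0 [Hl0 Hlat0]].
  destruct (shift_coercive x0 y0 Hx0 Hy0 Hxy) as [m0 [Hm0 Hsh0]].
  assert (Hmin : 0 < Rmin 1 m0 /\ Rmin 1 m0 <= 1 /\ Rmin 1 m0 <= m0)
    by (split; [apply Rmin_glb_lt; lra | split; [apply Rmin_l | apply Rmin_r]]).
  exists (lam0 * Rmin 1 m0). split; [nra | split].
  - intros p q Hpq. pose proof (nonzero_int_sq p q Hpq). pose proof (Hlat0 (IZR p) (IZR q)). nra.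
  - intros p q. rewrite bump_translate_eq.
    pose proof (Hlat0 (x0 + IZR p) (y0 + IZR q)). pose proof (Hsh0 p q). nra.
Qed.

End Lattice.

(** * Points close to A_{0,0} and the orbit of A_{0,0} *)

Definition close (r : R) (X : pt) : Prop :=
  0 < ph X /\ (ph X - 1) * (ph X - 1) <= r /\ Cnorm2 (pz X) <= r.

Lemma close_height r X : r <= / 100 -> close r X -> 9 / 10 <= ph X <= 11 / 10.
Proof. intros Hr [H0 [H1 H2]]. split; nra. Qed.

Lemma closer_than_horizontal r lam X w : 0 < r -> r <= / 100 -> 16 * r <= lam ->
  close r X -> Cnorm2 w >= lam -> hdist X A00 < hdist X (mkpt w 1).
Proof.
  intros Hr Hr1 Hl HX Hw. pose proof (close_height r X Hr1 HX) as Hh.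
  destruct HX as [H0 [H1 H2]]. apply hdist_lt_of_hquot; [lra | cbn; lra |].
  unfold hquot. cbn [pz ph A00].
  replace (Cnorm2 (Csub (pz X) C0)) with (Cnorm2 (pz X)) by (destruct (pz X); cunf; ring).
  replace (Cnorm2 (Csub (pz X) w)) with (Cnorm2 (Csub w (pz X))) by (destruct (pz X), w; cunf; ring).
  pose proof (Cnorm2_sub_ge w (pz X)).
  unfold Rdiv. apply Rmult_lt_compat_r; [apply Rinv_0_lt_compat; lra | lra].
Qed.

Lemma closer_than_low r X Y : r <= / 100 -> close r X -> 0 < ph Y <= / 2 ->
  hdist X A00 < hdist X Y.
Proof.
  intros Hr1 HX HY. pose proof (close_height r X Hr1 HX) as Hh.
  destruct HX as [H0 [H1 H2]]. apply hdist_lt_of_hquot; [lra | cbn; lra |].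
  unfold hquot. cbn [pz ph A00].
  replace (Cnorm2 (Csub (pz X) C0)) with (Cnorm2 (pz X)) by (destruct (pz X); cunf; ring).
  pose proof (Cnorm2_nonneg (Csub (pz X) (pz Y))).
  apply Rlt_trans with (/ 10); [apply div_lt | apply lt_div]; nra.
Qed.

Section Orbit.
Variables (Gam : mat -> Prop) (ta tb c b0 : Cx) (lam : R).
Hypothesis Hgrp : is_group Gam.
Hypothesis Hstab : forall k, Gam k -> m21 k = C0 ->
  exists p q : Z,
    k = mmul (mpowZ (transl ta) p) (mpowZ (transl tb) q) \/
    k = mneg (mmul (mpowZ (transl ta) p) (mpowZ (transl tb) q)).
Hypothesis Hemb : forall k X, Gam k -> 1 < ph X -> 1 < ph (act k X) -> m21 k = C0.
Hypothesis Hcn : Cnorm2 c = 1.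
Hypothesis Hg : Gam (gmat c b0).
Hypothesis Hlat : forall p q : Z, (p <> 0 \/ q <> 0)%Z ->
  Cnorm2 (Cadd (Cscale (IZR p) ta) (Cscale (IZR q) tb)) >= lam.
Hypothesis Hsh : forall p q : Z,
  Cnorm2 (Cadd b0 (Cadd (Cscale (IZR p) ta) (Cscale (IZR q) tb))) >= lam.

(* Maximality of the cusp: an element not fixing infinity has |c| >= 1, for otherwise
   it would map a point of height in (1, 1/|c|^2) to height > 1. *)
Lemma lower_left_ge1 k : Gam k -> m21 k <> C0 -> 1 <= Cnorm2 (m21 k).
Proof.
  intros Hk Hn. destruct (Rle_or_lt 1 (Cnorm2 (m21 k))) as [| Hlt]; auto. exfalso.
  assert (HN : 0 < Cnorm2 (m21 k)) by (apply Cnorm2_pos; auto).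
  set (N := Cnorm2 (m21 k)) in *.
  set (H := (1 + / N) / 2).
  assert (Hi : 1 < / N) by (rewrite <- Rinv_1; apply Rinv_lt_contravar; lra).
  apply Hn, (Hemb k (mkpt (Copp (Cmul (m22 k) (Cinv (m21 k)))) H) Hk); [cbn [ph]; unfold H; lra |].
  rewrite act_ph. cbn [pz ph].
  assert (E : Cadd (Cmul (m21 k) (Copp (Cmul (m22 k) (Cinv (m21 k))))) (m22 k) = C0).
  { destruct k as [a b [g1 g2] [d1 d2]]; simpl in *. unfold N in HN. cunf. unfold Cnorm2; simpl.
    apply Cx_eq; simpl; field; lra. }
  rewrite E. fold N. replace (Cnorm2 C0) with 0 by (cunf; ring).
  replace (H / (0 + N * (H * H))) with (/ (N * H)) by (unfold H; field; split; lra).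
  replace (N * H) with ((N + 1) / 2) by (unfold H; field; lra).
  rewrite <- Rinv_1 at 1. apply Rinv_lt_contravar; lra.
Qed.

Lemma orbit_cases k : Gam k ->
  (exists w, (k = transl w \/ k = mneg (transl w)) /\ (w = C0 \/ Cnorm2 w >= lam)) \/
  (exists B, (k = gmat c B \/ k = mneg (gmat c B)) /\ Cnorm2 B >= lam) \/
  (1 <= Cnorm2 (m21 k) /\ 1 <= Cnorm2 (m22 k)).
Proof.
  intro Hk. destruct Hgrp as [_ [Hdet [Hmul [Hinv _]]]].
  destruct (Ceq_dec (m21 k) C0) as [H0 | Hn].
  - left. destruct (Hstab k Hk H0) as [p [q Hpq]]. rewrite !mpowZ_transl, mmul_transl in Hpq.
    exists (Cadd (Cscale (IZR p) ta) (Cscale (IZR q) tb)). split; auto.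
    destruct (Z.eq_dec p 0), (Z.eq_dec q 0); [left; subst; destruct ta, tb; ceq; ring | ..];
      right; apply Hlat; tauto.
  - right. set (k' := mmul k (minv (gmat c b0))).
    assert (Hk' : Gam k') by (apply Hmul; auto).
    assert (Ek : k = mmul k' (gmat c b0)) by (symmetry; apply mmul_minv_cancel; auto).
    destruct (Ceq_dec (m21 k') C0) as [H0' | Hn'].
    + left. destruct (Hstab k' Hk' H0') as [p [q Hpq]]. rewrite !mpowZ_transl, mmul_transl in Hpq.
      exists (Cadd b0 (Cadd (Cscale (IZR p) ta) (Cscale (IZR q) tb))). split; [| apply Hsh].
      rewrite Ek. destruct Hpq as [E | E]; rewrite E; [left | right];
        rewrite ?mmul_mneg_l, mmul_transl_gmat; auto.
    + right. split; [apply lower_left_ge1; auto |].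
      (* the lower-left entry of k g^{-1} is -c d *)
      pose proof (lower_left_ge1 k' Hk' Hn') as Hn2.
      unfold k', gmat, minv in Hn2. simpl in Hn2.
      replace (Cnorm2 (Cadd (Cmul (m21 k) C0) (Cmul (m22 k) (Copp c)))) with (Cnorm2 (m22 k) * Cnorm2 c)
        in Hn2 by (destruct (m21 k), (m22 k), c; cunf; ring).
      rewrite Hcn in Hn2. lra.
Qed.

Lemma close_in_region r X : 0 < r -> r <= / 100 -> 16 * r <= lam -> close r X -> regionR Gam X.
Proof.
  intros Hr Hr1 Hl HX. split; [apply HX |].
  intros Y [k [Hk HY]] HYn. subst Y.
  destruct (orbit_cases k Hk) as [[w [Hkw Hw]] | [[B [HkB HB]] | [H1 H2]]].
  - replace (act k A00) with (act (transl w) A00) in *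
      by (destruct Hkw; subst k; rewrite ?act_mneg; auto).
    rewrite act_transl in *. cbn [pz ph A00] in *.
    destruct Hw as [-> | Hw].
    + exfalso; apply HYn; apply pt_eq; cbn [pz ph A00]; [ceq; ring | auto].
    + replace (Cadd C0 w) with w by (destruct w; ceq; ring). apply (closer_than_horizontal r lam); auto.
  - destruct HkB; subst k; rewrite ?act_mneg, act_gmat_A00 in *; auto;
      apply (closer_than_horizontal r lam); auto.
  - apply (closer_than_low r); auto. rewrite act_ph. cbn [pz ph A00].
    replace (Cnorm2 (Cadd (Cmul (m21 k) C0) (m22 k))) with (Cnorm2 (m22 k))
      by (destruct (m21 k), (m22 k); cunf; ring).
    split; [apply Rdiv_lt_0_compat | apply div_le]; lra.
Qed.

Lemma close_no_identification r X Y k : 0 < r -> r <= / 100 -> 16 * r <= lam ->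
  close r X -> close r Y -> Gam k -> act k X = Y -> X = Y.
Proof.
  intros Hr Hr1 Hl HX HY Hk E.
  pose proof (close_height r X Hr1 HX) as HhX. pose proof (close_height r Y Hr1 HY) as HhY.
  destruct HX as [_ [_ HzX]], HY as [HY0 [HY1 HzY]].
  destruct (orbit_cases k Hk) as [[w [Hkw Hw]] | [[B [HkB HB]] | [H1 H2]]].
  - (* a translation moves pz by w, and |w| is either 0 or large *)
    assert (E2 : act (transl w) X = Y) by (destruct Hkw; subst k; rewrite ?act_mneg in E; auto).
    rewrite act_transl in E2. clear E. subst Y. destruct Hw as [-> | Hw].
    + apply pt_eq; simpl; auto. destruct (pz X); ceq; ring.
    + exfalso. cbn [pz] in HzY. pose proof (Cnorm2_add_ge (pz X) w). lra.
  - (* gmat c B sends X near (B,1), which is far from 0 *)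
    assert (E2 : act (gmat c B) X = Y) by (destruct HkB; subst k; rewrite ?act_mneg in E; auto).
    exfalso. destruct X as [z h]. cbn [ph pz] in *.
    pose proof (act_gmat_pz c B z h Hcn ltac:(lra)) as K. rewrite E2 in K.
    pose proof (Cnorm2_nonneg z). pose proof (Cnorm2_nonneg (Csub (pz Y) B)).
    assert (Hden : 81 / 100 <= Cnorm2 z + h * h) by nra.
    assert (K2 : Cnorm2 (Csub (pz Y) B) <= 2 * r).
    { assert (Cnorm2 (Csub (pz Y) B) * (81 / 100 * (81 / 100))
              <= Cnorm2 (Csub (pz Y) B) * (Cnorm2 z + h * h) * (Cnorm2 z + h * h)).
      { rewrite Rmult_assoc. apply Rmult_le_compat_l; [apply Cnorm2_nonneg | nra]. }
      nra. }
    pose proof (Cnorm2_diff (pz Y) B). lra.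
  - (* |c|, |d| >= 1 push X below height 11/13 *)
    exfalso. destruct X as [z h]. cbn [ph pz] in *.
    rewrite <- E, act_ph in HY1, HY0. cbn [ph pz] in HY1, HY0.
    set (g := m21 k) in *. set (d := m22 k) in *.
    pose proof (Cnorm2_add_ge (Cmul g z) d) as A. rewrite Cnorm2_mul in A.
    set (N := Cnorm2 (Cadd (Cmul g z) d)) in *.
    assert (M1 : Cnorm2 g * (h * h - Cnorm2 z) >= 1 * (h * h - Cnorm2 z))
      by (apply Rle_ge, Rmult_le_compat_r; nra).
    assert (Den : 13 / 10 <= N + Cnorm2 g * (h * h)) by nra.
    assert (h / (N + Cnorm2 g * (h * h)) <= 11 / 13) by (apply div_le; lra).
    nra.
Qed.

End Orbit.

(** * Fixed points of gmat c B *)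

(* z is fixed by gmat c B iff z <> 0 and z^2 - B z + conj(c)^2 = 0. *)
Definition quad (B u z : Cx) : Cx := Cadd (Csub (Cmul z z) (Cmul B z)) u.
Definition fixprod (c : Cx) : Cx := Cmul (Cconj c) (Cconj c).

Lemma fixprod_unit c : Cnorm2 c = 1 -> Cnorm2 (fixprod c) = 1.
Proof. intro H. unfold fixprod. rewrite Cnorm2_mul, Cnorm2_conj, H. ring. Qed.

Lemma fixedpt_quad c B z : Cnorm2 c = 1 -> fixedpt (gmat c B) z ->
  z <> C0 /\ quad B (fixprod c) z = C0.
Proof.
  intros Hc [H1 H2]. unfold gmat in *; cbn [m11 m12 m21 m22] in *. split.
  - intro Hz; apply H1; subst; destruct c; ceq; ring.
  - rewrite (Cinv_unit c Hc) in H2. clear H1. unfold quad, fixprod.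
    destruct c as [c1 c2], B as [b1 b2], z as [z1 z2]. cunf. injection H2 as ? ?. ceq; nsatz.
Qed.

Lemma quad_fixedpt c B z : Cnorm2 c = 1 -> z <> C0 -> quad B (fixprod c) z = C0 ->
  fixedpt (gmat c B) z.
Proof.
  intros Hc Hz Hq. unfold fixedpt, gmat; cbn [m11 m12 m21 m22]. split.
  - intro H. assert (Hcz : Cmul c z = C0) by (rewrite <- H; destruct c, z; ceq; ring).
    destruct (Cmul_eq0 _ _ Hcz) as [-> |]; auto. cunf; lra.
  - rewrite (Cinv_unit c Hc). unfold quad, fixprod in Hq.
    destruct c as [c1 c2], B as [b1 b2], z as [z1 z2]. cunf. injection Hq as ? ?. clear Hz. ceq; nsatz.
Qed.

Lemma quad_vieta B u zm zp : quad B u zm = C0 -> quad B u zp = C0 -> zm <> zp ->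
  Cadd zm zp = B /\ Cmul zm zp = u.
Proof.
  intros H1 H2 Hn.
  assert (E : Cmul (Csub zm zp) (Csub (Cadd zm zp) B) = C0).
  { unfold quad in *. destruct B as [b1 b2], u as [u1 u2], zm as [m1 m2], zp as [p1 p2].
    cunf. injection H1 as ? ?. injection H2 as ? ?. ceq; nsatz. }
  destruct (Cmul_eq0 _ _ E) as [E1 | E1].
  - exfalso; apply Hn. destruct zm, zp; cunf. inversion E1. f_equal; lra.
  - assert (SB : Cadd zm zp = B) by (destruct zm, zp, B; cunf; inversion E1; f_equal; lra).
    split; auto. subst B. unfold quad in H1.
    destruct u as [u1 u2], zm as [m1 m2], zp as [p1 p2]. clear Hn E E1 H2. cunf. injection H1 as ? ?. ceq; nsatz.
Qed.

Lemma quad_roots_only B u zm zp z : Cadd zm zp = B -> Cmul zm zp = u -> quad B u z = C0 ->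
  z = zm \/ z = zp.
Proof.
  intros HB Hu Hq.
  assert (E : Cmul (Csub z zm) (Csub z zp) = C0).
  { subst. unfold quad in Hq. destruct z as [a b], zm as [m1 m2], zp as [p1 p2]. cunf.
    injection Hq as ? ?. ceq; nsatz. }
  destruct (Cmul_eq0 _ _ E) as [E1 | E1]; [left | right];
    destruct z, zm, zp; cunf; inversion E1; f_equal; lra.
Qed.

Lemma Csqrt_exists w : exists s, Cmul s s = w.
Proof.
  destruct w as [a b]. set (m := sqrt (a * a + b * b)).
  assert (Hm : m * m = a * a + b * b) by (apply sqrt_sqrt; nra).
  assert (Hm0 : 0 <= m) by apply sqrt_pos.
  assert (Ha : a <= m /\ - a <= m) by (split; nra).
  set (s1 := sqrt ((m + a) / 2)). set (s2 := sqrt ((m - a) / 2)).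
  assert (E1 : s1 * s1 = (m + a) / 2) by (apply sqrt_sqrt; lra).
  assert (E2 : s2 * s2 = (m - a) / 2) by (apply sqrt_sqrt; lra).
  assert (P : (s1 * s2) * (s1 * s2) = (b / 2) * (b / 2)).
  { replace ((s1 * s2) * (s1 * s2)) with ((s1 * s1) * (s2 * s2)) by ring. rewrite E1, E2. nra. }
  assert (P0 : 0 <= s1 * s2) by (apply Rmult_le_pos; apply sqrt_pos).
  destruct (Rle_or_lt 0 b).
  - assert (s1 * s2 = b / 2) by (apply Rsqr_inj; unfold Rsqr; lra).
    exists (s1, s2). ceq; nra.
  - assert (s1 * s2 = - (b / 2)) by (apply Rsqr_inj; unfold Rsqr; lra).
    exists (s1, - s2). ceq; nra.
Qed.

(* The product of the roots has modulus 1, so the smaller root is inside the unit disc. *)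
Lemma smaller_root_lt1 c zm zp : Cnorm2 c = 1 -> Cmul zm zp = fixprod c ->
  Cnorm2 zm < Cnorm2 zp -> Cnorm2 zm * Cnorm2 zp = 1 /\ Cnorm2 zm < 1.
Proof.
  intros Hc Hu Hlt.
  assert (Hnm : Cnorm2 zm * Cnorm2 zp = 1) by (rewrite <- Cnorm2_mul, Hu; apply fixprod_unit; auto).
  split; auto. pose proof (Cnorm2_nonneg zm).
  destruct (Rlt_or_le (Cnorm2 zm) 1); auto. nra.
Qed.

Lemma two_roots c B : Cnorm2 c = 1 -> 64 <= Cnorm2 B ->
  exists zm zp, quad B (fixprod c) zm = C0 /\ quad B (fixprod c) zp = C0 /\
    Cadd zm zp = B /\ Cmul zm zp = fixprod c /\ Cnorm2 zm < Cnorm2 zp.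
Proof.
  intros Hc Hb.
  destruct (Csqrt_exists (Csub (Cmul B B) (Cscale 4 (fixprod c)))) as [s Hs].
  set (z1 := Cscale (/ 2) (Cadd B s)). set (z2 := Cscale (/ 2) (Csub B s)).
  assert (S : Cadd z1 z2 = B) by (unfold z1, z2; destruct B, s; ceq; field).
  assert (P : Cmul z1 z2 = fixprod c).
  { unfold z1, z2. generalize (fixprod c) Hs. intros [u1 u2] H. destruct B as [b1 b2], s as [s1 s2].
    cunf. injection H as H H'. ceq.
    - replace u1 with ((b1 * b1 - b2 * b2 - (s1 * s1 - s2 * s2)) / 4) by lra. field.
    - replace u2 with ((b1 * b2 + b2 * b1 - (s1 * s2 + s2 * s1)) / 4) by lra. field. }
  assert (Q : forall z, quad B (fixprod c) z = Cmul (Csub z z1) (Csub z z2)).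
  { intro z. rewrite <- S, <- P. unfold quad. destruct z, z1, z2; ceq; ring. }
  assert (Q1 : quad B (fixprod c) z1 = C0) by (rewrite Q; destruct z1, z2; ceq; ring).
  assert (Q2 : quad B (fixprod c) z2 = C0) by (rewrite Q; destruct z1, z2; ceq; ring).
  assert (Hnm : Cnorm2 z1 * Cnorm2 z2 = 1) by (rewrite <- Cnorm2_mul, P; apply fixprod_unit; auto).
  pose proof (Cnorm2_add_le z1 z2) as A1. rewrite S in A1.
  pose proof (Cnorm2_nonneg z1). pose proof (Cnorm2_nonneg z2).
  destruct (Rtotal_order (Cnorm2 z1) (Cnorm2 z2)) as [Hl | [He | Hg]].
  - exists z1, z2. repeat split; auto.
  - exfalso. rewrite He in Hnm. assert (Cnorm2 z2 = 1) by nra. lra.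
  - exists z2, z1. repeat split; auto.
    + rewrite <- S. destruct z1, z2; ceq; ring.
    + rewrite <- P. destruct z1, z2; ceq; ring.
Qed.

Lemma roots_separated c B zm zp : Cnorm2 c = 1 -> Cadd zm zp = B -> Cmul zm zp = fixprod c ->
  Cnorm2 zm < Cnorm2 zp -> 64 <= Cnorm2 B -> 4 < Cnorm2 (Csub zp zm).
Proof.
  intros Hc HB Hu Hlt Hb.
  destruct (smaller_root_lt1 c zm zp Hc Hu Hlt) as [_ Hm1].
  pose proof (Cnorm2_add_le zm zp) as A1. rewrite HB in A1.
  pose proof (Cnorm2_sub_ge zp zm). lra.
Qed.

(** * Where the axis crosses H_inf *)

Lemma geod_sub_start zm zp t : Csub (Cadd zm (Cscale t (Csub zp zm))) zm = Cscale t (Csub zp zm).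
Proof. generalize (Csub zp zm); intros [? ?]; destruct zm; ceq; ring. Qed.

Lemma on_geod_Hinf zm zp X : on_geod zm zp X -> Hinf X ->
  exists t, 0 < t < 1 /\ pz X = Cadd zm (Cscale t (Csub zp zm)) /\ t * (1 - t) * Cnorm2 (Csub zp zm) = 1.
Proof.
  intros [t [Ht [Hz [Hh _]]]] Hi. unfold Hinf in Hi. rewrite Hi in Hh.
  exists t; repeat split; try lra; auto.
Qed.

Lemma axis_crosses_Hinf zm zp : 4 < Cnorm2 (Csub zp zm) ->
  exists Cp Dp : pt,
    on_geod zm zp Cp /\ Hinf Cp /\ on_geod zm zp Dp /\ Hinf Dp /\ Cp <> Dp /\
    (forall X, on_geod zm zp X -> Hinf X -> X = Cp \/ X = Dp).
Proof.
  intros HL. set (L := Cnorm2 (Csub zp zm)) in *.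
  set (d := sqrt (1 - 4 / L)).
  assert (Hq : 0 < 4 / L < 1) by (split; [apply Rdiv_lt_0_compat; lra | apply div_lt; lra]).
  assert (Hd2 : d * d = 1 - 4 / L) by (apply sqrt_sqrt; lra).
  assert (Hd0 : 0 < d) by (apply sqrt_lt_R0; lra).
  assert (Hd1 : d < 1) by nra.
  (* the two crossing parameters are the roots (1 -+ d)/2 of t (1-t) L = 1 *)
  set (t1 := (1 - d) / 2). set (t2 := (1 + d) / 2).
  assert (Ht : forall t, t * (1 - t) * L - 1 = - L * ((t - t1) * (t - t2))).
  { intro t. unfold t1, t2. replace (4 / L) with (1 - d * d) in Hq by lra.
    assert (E : L * (1 - d * d) = 4) by (rewrite Hd2; field; lra). nra. }
  exists (mkpt (Cadd zm (Cscale t1 (Csub zp zm))) 1), (mkpt (Cadd zm (Cscale t2 (Csub zp zm))) 1).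
  repeat split.
  - exists t1. cbn [pz ph]. repeat split; unfold t1; try lra. fold t1. pose proof (Ht t1). fold L. nra.
  - exists t2. cbn [pz ph]. repeat split; unfold t2; try lra. fold t2. pose proof (Ht t2). fold L. nra.
  - intro H. apply (f_equal (fun P => Cnorm2 (Csub (pz P) zm))) in H. cbn [pz] in H.
    rewrite !geod_sub_start, !Cnorm2_scale in H. fold L in H. unfold t1, t2 in H. nra.
  - intros X HX Hi. destruct (on_geod_Hinf zm zp X HX Hi) as [t [Ht01 [Hz Hl]]]. fold L in Hl.
    assert (Hroot : (t - t1) * (t - t2) = 0) by (pose proof (Ht t); nra).
    destruct (Rmult_integral _ _ Hroot) as [H1 | H1]; [left | right]; apply pt_eq; cbn [pz ph];
      try (rewrite Hz; f_equal; f_equal; lra); apply Hi.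
Qed.

Lemma crossings_ordered zm zp Cp Dp :
  on_geod zm zp Cp -> Hinf Cp -> on_geod zm zp Dp -> Hinf Dp ->
  Cmod (Csub (pz Cp) zm) < Cmod (Csub (pz Dp) zm) ->
  exists tC, 0 < tC /\ tC <= / 2 /\ tC * (1 - tC) * Cnorm2 (Csub zp zm) = 1 /\
    pz Cp = Cadd zm (Cscale tC (Csub zp zm)) /\ pz Dp = Cadd zm (Cscale (1 - tC) (Csub zp zm)).
Proof.
  intros HC HCi HD HDi Hlt.
  destruct (on_geod_Hinf _ _ _ HC HCi) as [tC [HtC [HCz HCl]]].
  destruct (on_geod_Hinf _ _ _ HD HDi) as [tD [HtD [HDz HDl]]].
  apply Cmod_lt_norm2 in Hlt. rewrite HCz, HDz, !geod_sub_start, !Cnorm2_scale in Hlt.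
  set (L := Cnorm2 (Csub zp zm)) in *.
  assert (L0 : 0 < L).
  { destruct (Rle_or_lt L 0) as [h | h]; auto. exfalso. assert (0 < tC * (1 - tC)) by nra.
    pose proof (Rmult_le_compat_l (tC * (1 - tC)) L 0 ltac:(lra) h). lra. }
  assert (tC * tC < tD * tD) by (apply Rmult_lt_reg_r with L; auto).
  assert (tC < tD) by nra.
  assert (S : (tC - tD) * (1 - tC - tD) = 0) by (apply Rmult_eq_reg_r with L; [nra | lra]).
  destruct (Rmult_integral _ _ S); [lra |].
  replace tD with (1 - tC) in HDz by lra. exists tC. repeat split; auto; lra.
Qed.

Lemma crossing_near_zero c B zm zp t :
  Cnorm2 c = 1 -> Cadd zm zp = B -> Cmul zm zp = fixprod c -> Cnorm2 zm < Cnorm2 zp ->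
  0 < t -> t <= / 2 -> t * (1 - t) * Cnorm2 (Csub zp zm) = 1 -> 32 <= Cnorm2 B ->
  Cnorm2 (Cadd zm (Cscale t (Csub zp zm))) * Cnorm2 B <= 136.
Proof.
  intros Hc HB Hu Hlt Ht0 Ht1 Ht HBb.
  destruct (smaller_root_lt1 c zm zp Hc Hu Hlt) as [Hnm nm1].
  pose proof (Cnorm2_add_le zm zp) as A1. rewrite HB in A1.
  pose proof (Cnorm2_sub_ge zp zm) as A2.
  pose proof (Cnorm2_add_le zm (Cscale t (Csub zp zm))) as A3. rewrite Cnorm2_scale in A3.
  set (nm := Cnorm2 zm) in *. set (np := Cnorm2 zp) in *. set (L := Cnorm2 (Csub zp zm)) in *.
  set (b := Cnorm2 B) in *.
  assert (nm0 : 0 <= nm) by apply Cnorm2_nonneg.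
  assert (npb : b <= 4 * np) by nra.
  assert (nmb : nm * b <= 4) by nra.
  assert (Lb : b <= 16 * L) by nra.
  assert (tL : t * L <= 2) by nra.
  assert (L0 : 0 <= L) by apply Cnorm2_nonneg.
  assert (t2L : t * t * L * b <= 64).
  { assert (t * t * L * b <= t * t * L * (16 * L)) by (apply Rmult_le_compat_l; nra). nra. }
  assert (A4 : Cnorm2 (Cadd zm (Cscale t (Csub zp zm))) * b <= (2 * nm + 2 * (t * t * L)) * b)
    by (apply Rmult_le_compat_r; lra).
  nra.
Qed.

(** * The lifted short arc stays close to A_{0,0} *)

Lemma partner_preimage c B e Dp : Cnorm2 c = 1 -> pz Dp = Csub B e -> ph Dp = 1 ->
  ph (act (minv (gmat c B)) Dp) = / (Cnorm2 e + 1) /\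
  Cnorm2 (pz (act (minv (gmat c B)) Dp)) = Cnorm2 e / ((Cnorm2 e + 1) * (Cnorm2 e + 1)).
Proof.
  intros Hc HDz HDh.
  pose proof (Cnorm2_nonneg e) as He.
  assert (Ecz : Cadd (Cmul (Copp c) (pz Dp)) (Cmul c B) = Cmul c e)
    by (rewrite HDz; destruct c, B, e; ceq; ring).
  assert (Den : Cnorm2 (Cadd (Cmul (Copp c) (pz Dp)) (Cmul c B)) + Cnorm2 (Copp c) * (ph Dp * ph Dp)
                = Cnorm2 e + 1)
    by (rewrite Ecz, Cnorm2_mul, Cnorm2_opp, Hc, HDh; ring).
  split.
  - rewrite act_ph. unfold gmat, minv. cbn [m21 m22 m11 m12]. rewrite Den, HDh. field. lra.
  - rewrite act_pz. unfold gmat, minv. cbn [m21 m22 m11 m12]. rewrite Den, Ecz, Cnorm2_scale.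
    replace (Cadd (Cmul (Cadd (Cmul C0 (pz Dp)) (Copp (Copp (Cinv c)))) (Cconj (Cmul c e)))
                  (Cscale (ph Dp * ph Dp) (Cmul C0 (Cconj (Copp c)))))
      with (Cmul (Cinv c) (Cconj (Cmul c e)))
      by (generalize (Cinv c) (pz Dp) c e; intros [? ?] [? ?] [? ?] [? ?]; ceq; ring).
    rewrite Cnorm2_mul, Cnorm2_conj, Cnorm2_mul, Cinv_unit, Cnorm2_conj, Hc by auto.
    field. lra.
Qed.

Lemma hquot_partner_le P C eps : 0 <= eps <= 1 ->
  ph P = / (eps + 1) -> Cnorm2 (pz P) = eps / ((eps + 1) * (eps + 1)) ->
  ph C = 1 -> Cnorm2 (pz C) = eps -> hquot P C <= 5 * eps.
Proof.
  intros Heps HPh HPz HCh HCz. unfold hquot. rewrite HCh.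
  pose proof (Cnorm2_sub_le (pz P) (pz C)) as S1. rewrite HCz in S1.
  assert (A1 : Cnorm2 (pz P) <= eps) by (rewrite HPz; apply div_le; nra).
  assert (A2 : (ph P - 1) * (ph P - 1) <= eps).
  { rewrite HPh. replace (/ (eps + 1) - 1) with (- (eps / (eps + 1))) by (field; lra).
    assert (0 <= eps / (eps + 1) <= eps).
    { split; [apply Rmult_le_pos; [lra | left; apply Rinv_0_lt_compat; lra] | apply div_le; nra]. }
    nra. }
  assert (A3 : 1 <= 2 * ph P) by (rewrite HPh; apply le_div; lra).
  apply div_le; [lra | nra].
Qed.

Lemma close_of_hquot r X C : ph C = 1 -> 0 < ph X ->
  Cnorm2 (pz C) <= / 4200 -> 42 * Cnorm2 (pz C) <= r ->
  hquot X C <= 5 * Cnorm2 (pz C) -> close r X.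
Proof.
  intros HCh HX Hsmall Hr HXC. unfold hquot in HXC. rewrite HCh in HXC.
  set (e := pz C) in *. set (eps := Cnorm2 e) in *.
  assert (Q : Cnorm2 (Csub (pz X) e) + (ph X - 1) * (ph X - 1) <= 5 * eps * (2 * ph X * 1)).
  { apply Rmult_le_reg_r with (/ (2 * ph X * 1)); [apply Rinv_0_lt_compat; lra |].
    replace (5 * eps * (2 * ph X * 1) * / (2 * ph X * 1)) with (5 * eps) by (field; lra). exact HXC. }
  pose proof (Cnorm2_nonneg (Csub (pz X) e)). pose proof (Cnorm2_nonneg e).
  pose proof (Rle_0_sqr (ph X - 1)) as T2. unfold Rsqr in T2.
  assert (Hh2 : ph X <= 2).
  { destruct (Rle_or_lt (ph X) 2); auto. exfalso.
    assert ((ph X - 1) * (ph X - 1) >= ph X * ph X / 4) by nra. nra. }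
  assert (T1 : 5 * eps * (2 * ph X * 1) <= 20 * eps) by nra.
  split; [auto | split; [lra |]].
  pose proof (Cnorm2_diff e (pz X)) as K.
  replace (Csub e (pz X)) with (Copp (Csub (pz X) e)) in K
    by (generalize e (pz X); intros [? ?] [? ?]; ceq; ring).
  rewrite Cnorm2_opp in K. fold eps in K. lra.
Qed.

Lemma segment_close c B Cp Dp r X : Cnorm2 c = 1 ->
  ph Cp = 1 -> ph Dp = 1 -> pz Dp = Csub B (pz Cp) ->
  42 * Cnorm2 (pz Cp) <= r -> r <= / 100 ->
  hseg (act (minv (gmat c B)) Dp) Cp X -> close r X.
Proof.
  intros Hc HCh HDh HDz Hr Hr1 HX.
  pose proof (Cnorm2_nonneg (pz Cp)).
  destruct (partner_preimage c B (pz Cp) Dp Hc HDz HDh) as [HPh HPz].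
  set (P := act (minv (gmat c B)) Dp) in *.
  assert (HP0 : 0 < ph P) by (rewrite HPh; apply Rinv_0_lt_compat; lra).
  pose proof (hquot_partner_le P Cp (Cnorm2 (pz Cp)) ltac:(lra) HPh HPz HCh eq_refl).
  pose proof (hquot_le_of_hseg P Cp X HP0 ltac:(lra) HX).
  apply (close_of_hquot r X Cp); auto; [apply HX | lra | lra].
Qed.

(* The data fixing the lifted short arc [g^{-1}(D), C] of g. *)
Definition short_arc_data (g : mat) (zm zp : Cx) (Cp Dp : pt) : Prop :=
  fixedpt g zm /\ fixedpt g zp /\ zm <> zp /\ Cmod zm < Cmod zp /\
  on_geod zm zp Cp /\ Hinf Cp /\ on_geod zm zp Dp /\ Hinf Dp /\ Cp <> Dp /\
  Cmod (Csub (pz Cp) zm) < Cmod (Csub (pz Dp) zm).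

Lemma short_arc_exists c B : Cnorm2 c = 1 -> 64 <= Cnorm2 B ->
  exists zm zp : Cx,
    fixedpt (gmat c B) zm /\ fixedpt (gmat c B) zp /\ zm <> zp /\ Cmod zm < Cmod zp /\
    (forall z, fixedpt (gmat c B) z -> z = zm \/ z = zp) /\
    exists Cp Dp : pt,
      on_geod zm zp Cp /\ Hinf Cp /\ on_geod zm zp Dp /\ Hinf Dp /\ Cp <> Dp /\
      (forall X, on_geod zm zp X -> Hinf X -> X = Cp \/ X = Dp).
Proof.
  intros Hc HB. destruct (two_roots c B Hc HB) as [zm [zp [Q1 [Q2 [S [P Hlt]]]]]].
  destruct (smaller_root_lt1 c zm zp Hc P Hlt) as [Hnm _].
  assert (Hnz : forall z, Cnorm2 z <> 0 -> z <> C0) by (intros z Hz E; apply Hz; rewrite E; cunf; ring).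
  assert (Hzm : zm <> C0) by (apply Hnz; intro E; rewrite E in Hnm; lra).
  assert (Hzp : zp <> C0) by (apply Hnz; intro E; rewrite E in Hnm; lra).
  exists zm, zp.
  split; [apply quad_fixedpt; auto |].
  split; [apply quad_fixedpt; auto |].
  split; [intro E; rewrite E in Hlt; lra |].
  split; [apply norm2_lt_Cmod; auto |].
  split.
  - intros z Hz. destruct (fixedpt_quad _ _ _ Hc Hz) as [_ Hq]. apply (quad_roots_only B (fixprod c)); auto.
  - apply axis_crosses_Hinf. apply (roots_separated c B); auto.
Qed.

Lemma short_arc_close c B r zm zp Cp Dp X : Cnorm2 c = 1 -> r <= / 100 ->
  64 <= Cnorm2 B -> 136 * 42 <= r * Cnorm2 B ->
  short_arc_data (gmat c B) zm zp Cp Dp ->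
  hseg (act (minv (gmat c B)) Dp) Cp X -> close r X.
Proof.
  intros Hc Hr1 HB64 HBr [Fm [Fp [Hne [Hmod [HC [HCi [HD [HDi [_ Hord]]]]]]]]] HX.
  destruct (fixedpt_quad _ _ _ Hc Fm) as [_ Qm]. destruct (fixedpt_quad _ _ _ Hc Fp) as [_ Qp].
  destruct (quad_vieta _ _ _ _ Qm Qp Hne) as [S P].
  destruct (crossings_ordered zm zp Cp Dp HC HCi HD HDi Hord) as [tC [HtC0 [HtC1 [Hl [HCz HDz]]]]].
  pose proof (crossing_near_zero c B zm zp tC Hc S P (Cmod_lt_norm2 _ _ Hmod) HtC0 HtC1 Hl ltac:(lra)) as Hnear.
  rewrite <- HCz in Hnear.
  apply (segment_close c B Cp Dp r X); auto.
  - rewrite HDz, HCz, <- S. destruct zm, zp; ceq; ring.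
  - pose proof (Cnorm2_nonneg (pz Cp)). nra.
Qed.

Theorem lemma4p2
  (Gam : mat -> Prop) (ta tb : Cx) (x0 y0 : R) (c : Cx)
  (Hgrp : is_group Gam) (Hdisc : discrete Gam) (Htf : torsion_free Gam)
  (* stabiliser of infinity generated by a = transl ta, b = transl tb *)
  (Ha : Gam (transl ta)) (Hb : Gam (transl tb))
  (Hind : forall r s : R, Cadd (Cscale r ta) (Cscale s tb) = C0 -> r = 0 /\ s = 0)
  (Hstab : forall k, Gam k -> m21 k = C0 ->
     exists p q : Z,
       k = mmul (mpowZ (transl ta) p) (mpowZ (transl tb) q) \/
       k = mneg (mmul (mpowZ (transl ta) p) (mpowZ (transl tb) q)))
  (* maximal cusp neighbourhood: the lifts {h>1} have disjoint interiors *)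
  (Hemb : forall k X, Gam k -> 1 < ph X -> 1 < ph (act k X) -> m21 k = C0)
  (* the bumping point and the element g *)
  (Hx0 : 0 <= x0 < 1) (Hy0 : 0 <= y0 < 1) (Hxy : x0 <> 0 \/ y0 <> 0)
  (Hc : c <> C0)
  (Hg : Gam (Mat (Cmul c (Cadd (Cscale x0 ta) (Cscale y0 tb))) (Copp (Cinv c)) c C0))
  (HgA : act (Mat (Cmul c (Cadd (Cscale x0 ta) (Cscale y0 tb))) (Copp (Cinv c)) c C0) A00
         = mkpt (Cadd (Cscale x0 ta) (Cscale y0 tb)) 1)
  (HgH1 : forall X, H0 X ->
     Hinf (act (Mat (Cmul c (Cadd (Cscale x0 ta) (Cscale y0 tb))) (Copp (Cinv c)) c C0) X))
  (HgH2 : forall Y, Hinf Y -> exists X, H0 X /\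
     act (Mat (Cmul c (Cadd (Cscale x0 ta) (Cscale y0 tb))) (Copp (Cinv c)) c C0) X = Y) :
  let g := Mat (Cmul c (Cadd (Cscale x0 ta) (Cscale y0 tb))) (Copp (Cinv c)) c C0 in
  exists N0 : R, forall p q : Z,
    sqrt (IZR p ^ 2 + IZR q ^ 2) > N0 ->
    let gpq := mmul (mmul (mpowZ (transl ta) p) (mpowZ (transl tb) q)) g in
    (* the short arc is defined *)
    (exists zm zp : Cx,
       fixedpt gpq zm /\ fixedpt gpq zp /\ zm <> zp /\ Cmod zm < Cmod zp /\
       (forall z, fixedpt gpq z -> z = zm \/ z = zp) /\
       exists Cp Dp : pt,
         on_geod zm zp Cp /\ Hinf Cp /\ on_geod zm zp Dp /\ Hinf Dp /\ Cp <> Dp /\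
         (forall X, on_geod zm zp X -> Hinf X -> X = Cp \/ X = Dp)) /\
    (* it is R-close to A, and embedded in M *)
    (forall (zm zp : Cx) (Cp Dp : pt),
       fixedpt gpq zm -> fixedpt gpq zp -> zm <> zp -> Cmod zm < Cmod zp ->
       on_geod zm zp Cp -> Hinf Cp -> on_geod zm zp Dp -> Hinf Dp -> Cp <> Dp ->
       Cmod (Csub (pz Cp) zm) < Cmod (Csub (pz Dp) zm) ->
       (forall X, hseg (act (minv gpq) Dp) Cp X -> regionR Gam X) /\
       (forall X Y k, hseg (act (minv gpq) Dp) Cp X -> hseg (act (minv gpq) Dp) Cp Y ->
          Gam k -> act k X = Y -> X = Y)).
Proof.
  intros g. change g with (gmat c (Cadd (Cscale x0 ta) (Cscale y0 tb))) in *.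
  set (b0 := Cadd (Cscale x0 ta) (Cscale y0 tb)) in *.
  pose proof (gmat_unit c b0 Hc HgA) as Hcn.
  destruct (lattice_gaps ta tb x0 y0 Hind Hx0 Hy0 Hxy) as [lam [Hlam [Hlat Hsh]]].
  fold b0 in Hsh.
  set (r := Rmin (/ 100) (lam / 16)).
  assert (Hr : 0 < r /\ r <= / 100 /\ 16 * r <= lam).
  { pose proof (Rmin_r (/ 100) (lam / 16)) as H. fold r in H. split; [apply Rmin_glb_lt | split; [apply Rmin_l |]]; lra. }
  destruct (bump_translate_far ta tb x0 y0 Hind Hx0 Hy0 (Rmax 64 (136 * 42 / r))) as [N0 HN0].
  exists N0. intros p q HN gpq.
  unfold gpq. rewrite gpq_gmat.
  pose proof (HN0 p q HN) as HB. fold b0 in HB.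
  set (B := Cadd b0 (Cadd (Cscale (IZR p) ta) (Cscale (IZR q) tb))) in *.
  pose proof (Rmax_l 64 (136 * 42 / r)). pose proof (Rmax_r 64 (136 * 42 / r)).
  assert (HBr : 136 * 42 <= r * Cnorm2 B).
  { replace (136 * 42) with (r * (136 * 42 / r)) by (field; lra). apply Rmult_le_compat_l; lra. }
  split; [apply short_arc_exists; auto; lra |].
  intros zm zp Cp Dp Fm Fp Hne Hmod HC HCi HD HDi HCD Hord.
  assert (Hdata : short_arc_data (gmat c B) zm zp Cp Dp) by (unfold short_arc_data; tauto).
  assert (Hclose : forall X, hseg (act (minv (gmat c B)) Dp) Cp X -> close r X)
    by (intros X; apply (short_arc_close c B r zm zp Cp Dp X); auto; lra).
  split.
  - intros X HX. apply (close_in_region Gam ta tb c b0 lam Hgrp Hstab Hemb Hcn Hg Hlat Hsh r); auto; lra.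
  - intros X Y k HX HY Hk E.
    apply (close_no_identification Gam ta tb c b0 lam Hgrp Hstab Hemb Hcn Hg Hlat Hsh r X Y k); auto; lra.
Qed.
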